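(* Let $\vec{B}_1,\dots,\vec{B}_d$ ($d\in\mathbb{N}$) be mutually coorthogonal blades in $\mathcal{G}^{p,q}$ with $\vec{B}_k^2\in\mathbb{R}\setminus\{0\}$ (so $\vec B_k^{-1}=\vec B_k\vec B_k^{-2}$), let $\vec{A}\in\mathcal{G}^{p,q}$ and $\vec{j}=(j_1,\dots,j_d)\in\{0,1\}^d$. Then for every permutation $\sigma$ of $\{1,\dots,d\}$, $$\vec{A}_{\vec c^{(j_{\sigma(1)},\dots,j_{\sigma(d)})}(\overrightarrow{\vec B_{\sigma(1)},\dots,\vec B_{\sigma(d)}})}=\vec{A}_{\vec c^{\vec j}(\overrightarrow{\vec B_1,\dots,\vec B_d})}\quad\text{and}\quad \vec{A}_{\vec c^{(j_{\sigma(1)},\dots,j_{\sigma(d)})}(\overleftarrow{\vec B_{\sigma(1)},\dots,\vec B_{\sigma(d)}})}=\vec{A}_{\vec c^{\vec j}(\overleftarrow{\vec B_1,\dots,\vec B_d})},$$ i.e. these expressions do not depend on the order of the blades.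
   Context: $\mathcal{G}^{p,q}$ is the real geometric algebra of $\mathbb{R}^{p,q}$. Blades $\vec A,\vec B$ are coorthogonal if $\vec A\vec B=\pm\vec B\vec A$. For an invertible $\vec B$ and any $\vec A$: $\vec{A}_{\vec c^0(\vec{B})}=\frac12(\vec{A}+\vec{B}^{-1}\vec{A}\vec{B})$, $\vec{A}_{\vec c^1(\vec{B})}=\frac12(\vec{A}-\vec{B}^{-1}\vec{A}\vec{B})$. For an ordered tuple $(\vec B_1,\dots,\vec B_d)$ of invertible elements and $\vec j\in\{0,1\}^d$: $\vec{A}_{\vec c^{\vec{j}}(\overrightarrow{\vec B_1,\dots,\vec B_d})}=((\vec{A}_{\vec c^{j_1}(\vec{B}_1)})_{\vec c^{j_2}(\vec{B}_2)}\cdots)_{\vec c^{j_d}(\vec{B}_d)}$ and $\vec{A}_{\vec c^{\vec{j}}(\overleftarrow{\vec B_1,\dots,\vec B_d})}=((\vec{A}_{\vec c^{j_d}(\vec{B}_d)})_{\vec c^{j_{d-1}}(\vec{B}_{d-1})}\cdots)_{\vec c^{j_1}(\vec{B}_1)}$. *)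

From HB Require Import structures.
From mathcomp Require Import all_boot all_order all_algebra.
From mathcomp Require Import reals.
Set Implicit Arguments. Unset Strict Implicit. Unset Printing Implicit Defensive.
Import Order.TTheory GRing.Theory Num.Theory.
Local Open Scope ring_scope.

Section GA.
Variables (R : realType) (p q : nat).

(* Basis blades e_S indexed by subsets S of {0,...,p+q-1};
   e_i^2 = +1 for i < p and -1 for p <= i < p+q. *)
Definition idx := 'I_(p + q).
Definition mv := {ffun {set idx} -> R}.

Definition sqsig (i : idx) : R := if (i < p)%N then 1 else -1.

Definition reorder_sign (A B : {set idx}) : R :=
  (-1) ^+ #|[set x : idx * idx | [&& x.1 \in A, x.2 \in B & (x.2 < x.1)%N]]|.

Definition symdiff (A B : {set idx}) : {set idx} := (A :\: B) :|: (B :\: A).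

Definition basis (S : {set idx}) : mv := [ffun T => (T == S)%:R].

Definition gmul (X Y : mv) : mv :=
  [ffun S => \sum_(A : {set idx}) \sum_(B : {set idx})
     if symdiff A B == S then
       X A * Y B * (reorder_sign A B * \prod_(i in A :&: B) sqsig i)
     else 0].

Definition wedge (X Y : mv) : mv :=
  [ffun S => \sum_(A : {set idx}) \sum_(B : {set idx})
     if (A :|: B == S) && (A :&: B == set0) then X A * Y B * reorder_sign A B
     else 0].

Definition one_mv : mv := basis set0.
Definition scal (c : R) : mv := [ffun S => c * one_mv S].

Definition is_vector (v : mv) : Prop := forall S : {set idx}, #|S| != 1%N -> v S = 0.

Definition blade (X : mv) : Prop :=
  exists (c : R) (vs : seq mv),
    (forall v, v \in vs -> is_vector v) /\ X = [ffun S => c * foldr wedge one_mv vs S].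

Definition sq_nonzero_scalar (X : mv) : Prop :=
  exists c : R, c != 0 /\ gmul X X = scal c.

(* inverse of an element whose square is a nonzero scalar: B^{-1} = B B^{-2} *)
Definition sinv (X : mv) : mv := [ffun S => ((gmul X X) set0)^-1 * X S].

Definition coorthogonal (X Y : mv) : Prop :=
  gmul X Y = gmul Y X \/ gmul X Y = [ffun S => - gmul Y X S].

Definition cproj (j : bool) (B A : mv) : mv :=
  let C := gmul (gmul (sinv B) A) B in
  if j then [ffun S => (2%:R)^-1 * (A S - C S)]
       else [ffun S => (2%:R)^-1 * (A S + C S)].

(* forward: apply (B_1,j_1) first, ..., (B_d,j_d) last *)
Definition cproj_fwd (Bs : seq (mv * bool)) (A : mv) : mv :=
  foldl (fun X bj => cproj bj.2 bj.1 X) A Bs.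

(* backward: apply (B_d,j_d) first, ..., (B_1,j_1) last *)
Definition cproj_bwd (Bs : seq (mv * bool)) (A : mv) : mv :=
  foldr (fun bj X => cproj bj.2 bj.1 X) A Bs.

End GA.

(** With [C_B(A) = B^-1 A B] and [s_j = (-1)^j] we have [A_{c^j(B)} = (A + s_j C_B(A))/2],
    a polynomial in the linear operator [C_B].  By associativity of the geometric product,
    [C_B (C_B' A) = (B' B)^-1 A (B' B)], and when [B B' = +- B' B] the two signs cancel,
    so [C_B] and [C_B'] commute, hence so do the projections.  The iterated projections
    are folds of pairwise commuting maps and are therefore invariant under permuting the
    blades. *)
From HB Require Import structures.
From mathcomp Require Import all_boot all_order all_fingroup all_algebra.
From mathcomp Require Import reals ring.
Import Order.TTheory GRing.Theory Num.Theory.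
Set Implicit Arguments.
Unset Strict Implicit.
Unset Printing Implicit Defensive.
Local Open Scope ring_scope.

Lemma foldl_map (T1 T2 U : Type) (h : T1 -> T2) (g : U -> T2 -> U) z s :
  foldl g z (map h s) = foldl (fun z x => g z (h x)) z s.
Proof. by elim: s z => //= x s IHs z; rewrite IHs. Qed.

Section CommutingFolds.
Variables (I : eqType) (T : Type) (f : I -> T -> T).
Hypothesis f_comm : forall i k x, f i (f k x) = f k (f i x).

Lemma foldr_cat_cons x i s t : foldr f x (s ++ i :: t) = f i (foldr f x (s ++ t)).
Proof. by elim: s => [|a s IHs] //=; rewrite IHs f_comm. Qed.

Lemma perm_foldr x s1 s2 : perm_eq s1 s2 -> foldr f x s1 = foldr f x s2.
Proof.
elim: s1 s2 => [|i s1 IHs] s2; first by rewrite perm_sym => /perm_nilP ->.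
move=> eq_s12; have s2i : i \in s2 by rewrite -(perm_mem eq_s12) mem_head.
move: eq_s12; case/splitPr: s2i => a b eq_s12.
rewrite foldr_cat_cons /= -(IHs (a ++ b)) //.
by rewrite -(perm_cons i) (perm_trans eq_s12) // -cat1s perm_catCA.
Qed.

Lemma perm_foldl x s1 s2 : perm_eq s1 s2 ->
  foldl (fun z i => f i z) x s1 = foldl (fun z i => f i z) x s2.
Proof.
move=> eq_s12; rewrite -(revK s1) -(revK s2) !foldl_rev; apply: perm_foldr.
by rewrite perm_rev perm_sym perm_rev perm_sym.
Qed.
End CommutingFolds.

Lemma perm_map_enum (T : finType) (s : {perm T}) : perm_eq (map s (enum T)) (enum T).
Proof.
apply: uniq_perm; first by rewrite map_inj_uniq ?enum_uniq //; apply: perm_inj.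
  exact: enum_uniq.
by move=> x; rewrite mem_enum; apply/mapP; exists (s^-1 x)%g; rewrite ?mem_enum ?permKV.
Qed.

Section GeometricProduct.
Variables (R : realType) (p q : nat).
Local Notation mv := (mv R p q).
Local Notation sset := {set idx p q}.

(* [mv] is a definition, so the module structure of [{ffun _ -> R}] must be copied. *)
HB.instance Definition _ := GRing.Lmodule.copy mv {ffun sset -> R^o}.

Lemma scale_mvE a (X : mv) S : (a *: X) S = a * X S.
Proof. by rewrite ffunE. Qed.

Definition gmul_sign (A B : sset) : R :=
  reorder_sign R A B * \prod_(i in A :&: B) sqsig R i.

Lemma gmulE (X Y : mv) S : gmul X Y S =
  \sum_A \sum_B (if symdiff A B == S then X A * Y B * gmul_sign A B else 0).
Proof. by rewrite ffunE. Qed.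

Lemma symdiffA (A B C : sset) : symdiff (symdiff A B) C = symdiff A (symdiff B C).
Proof.
by apply/setP => i; rewrite !inE; case: (i \in A); case: (i \in B); case: (i \in C).
Qed.

Lemma reorder_sign_prod (A B : sset) : reorder_sign R A B =
  \prod_(x : idx p q * idx p q)
     (if [&& x.1 \in A, x.2 \in B & (x.2 < x.1)%N] then -1 else 1).
Proof.
by rewrite /reorder_sign -prodr_const big_mkcond; apply: eq_bigr => x _; rewrite inE.
Qed.

Lemma reorder_sign_symdiffl (A B C : sset) :
  reorder_sign R (symdiff A B) C = reorder_sign R A C * reorder_sign R B C.
Proof.
rewrite !reorder_sign_prod -big_split; apply: eq_bigr => x _ /=; rewrite !inE.
by case: (x.1 \in A); case: (x.1 \in B); case: (x.2 \in C); case: (x.2 < x.1)%N;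
  rewrite /= ?mulrNN ?mulr1 ?mul1r.
Qed.

Lemma reorder_sign_symdiffr (A B C : sset) :
  reorder_sign R A (symdiff B C) = reorder_sign R A B * reorder_sign R A C.
Proof.
rewrite !reorder_sign_prod -big_split; apply: eq_bigr => x _ /=; rewrite !inE.
by case: (x.1 \in A); case: (x.2 \in B); case: (x.2 \in C); case: (x.2 < x.1)%N;
  rewrite /= ?mulrNN ?mulr1 ?mul1r.
Qed.

Lemma prod_sqsig_cocycle (A B C : sset) :
  \prod_(i in A :&: B) sqsig R i * \prod_(i in symdiff A B :&: C) sqsig R i =
  \prod_(i in B :&: C) sqsig R i * \prod_(i in A :&: symdiff B C) sqsig R i.
Proof.
rewrite !(big_mkcond (mem (_ :&: _))) -!big_split; apply: eq_bigr => i _ /=.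
by rewrite !inE; case: (i \in A); case: (i \in B); case: (i \in C); rewrite /= ?mulr1 ?mul1r.
Qed.

Lemma gmul_sign_cocycle (A B C : sset) :
  gmul_sign A B * gmul_sign (symdiff A B) C = gmul_sign B C * gmul_sign A (symdiff B C).
Proof.
rewrite /gmul_sign reorder_sign_symdiffl reorder_sign_symdiffr.
have := prod_sqsig_cocycle A B C.
set w1 := \prod_(i in A :&: B) _; set w2 := \prod_(i in _ :&: C) _.
set w3 := \prod_(i in B :&: C) _; set w4 := \prod_(i in A :&: _) _ => w_cocycle.
set rAB := reorder_sign R A B; set rAC := reorder_sign R A C; set rBC := reorder_sign R B C.
transitivity (rAB * rAC * rBC * (w1 * w2)); first by ring.
by rewrite w_cocycle; ring.
Qed.

Lemma sum_if_eq (x : sset) (F : sset -> R) : \sum_D (if x == D then F D else 0) = F x.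
Proof. by rewrite -big_mkcond (big_pred1 x) // => D; rewrite /= eq_sym. Qed.

Lemma gmul_gmull_sum (X Y Z : mv) S : gmul (gmul X Y) Z S =
  \sum_A \sum_B \sum_C (if symdiff (symdiff A B) C == S then
    X A * Y B * Z C * (gmul_sign A B * gmul_sign (symdiff A B) C) else 0).
Proof.
rewrite gmulE; pose F A B C D := if symdiff D C == S then
  X A * Y B * Z C * (gmul_sign A B * gmul_sign D C) else 0.
transitivity (\sum_D \sum_C \sum_A \sum_B (if symdiff A B == D then F A B C D else 0)).
  apply: eq_bigr => D _; apply: eq_bigr => C _; rewrite gmulE /F.
  case: ifP => _; last by rewrite big1 // => A _; rewrite big1 // => B _; case: ifP.
  rewrite -mulrA big_distrl; apply: eq_bigr => A _ /=.
  by rewrite big_distrl; apply: eq_bigr => B _ /=; case: ifP => _; rewrite ?mul0r //; ring.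
under eq_bigr => D _ do (rewrite exchange_big; under eq_bigr => A _ do rewrite exchange_big).
rewrite exchange_big; apply: eq_bigr => A _; rewrite exchange_big.
apply: eq_bigr => B _; rewrite exchange_big; apply: eq_bigr => C _.
exact: (sum_if_eq _ (F A B C)).
Qed.

Lemma gmul_gmulr_sum (X Y Z : mv) S : gmul X (gmul Y Z) S =
  \sum_A \sum_B \sum_C (if symdiff A (symdiff B C) == S then
    X A * Y B * Z C * (gmul_sign B C * gmul_sign A (symdiff B C)) else 0).
Proof.
rewrite gmulE; pose F A B C E := if symdiff A E == S then
  X A * Y B * Z C * (gmul_sign B C * gmul_sign A E) else 0.
transitivity (\sum_A \sum_E \sum_B \sum_C (if symdiff B C == E then F A B C E else 0)).
  apply: eq_bigr => A _; apply: eq_bigr => E _; rewrite gmulE /F.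
  case: ifP => _; last by rewrite big1 // => B _; rewrite big1 // => C _; case: ifP.
  rewrite big_distrr big_distrl; apply: eq_bigr => B _ /=.
  rewrite big_distrr big_distrl; apply: eq_bigr => C _ /=.
  by case: ifP => _; rewrite ?mulr0 ?mul0r //; ring.
apply: eq_bigr => A _; rewrite exchange_big; apply: eq_bigr => B _.
rewrite exchange_big; apply: eq_bigr => C _.
exact: (sum_if_eq _ (F A B C)).
Qed.

Lemma gmulA (X Y Z : mv) : gmul (gmul X Y) Z = gmul X (gmul Y Z).
Proof.
apply/ffunP => S; rewrite gmul_gmull_sum gmul_gmulr_sum.
apply: eq_bigr => A _; apply: eq_bigr => B _; apply: eq_bigr => C _.
by rewrite symdiffA gmul_sign_cocycle.
Qed.

Lemma gmulDl (X Y Z : mv) : gmul (X + Y) Z = gmul X Z + gmul Y Z.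
Proof.
apply/ffunP => S; rewrite !ffunE -big_split; apply: eq_bigr => A _ /=.
rewrite -big_split; apply: eq_bigr => B _ /=; rewrite !ffunE.
by case: ifP => _; rewrite ?addr0 //; ring.
Qed.

Lemma gmulDr (X Y Z : mv) : gmul X (Y + Z) = gmul X Y + gmul X Z.
Proof.
apply/ffunP => S; rewrite !ffunE -big_split; apply: eq_bigr => A _ /=.
rewrite -big_split; apply: eq_bigr => B _ /=; rewrite !ffunE.
by case: ifP => _; rewrite ?addr0 //; ring.
Qed.

Lemma gmulZl a (X Y : mv) : gmul (a *: X) Y = a *: gmul X Y.
Proof.
apply/ffunP => S; rewrite scale_mvE !ffunE big_distrr; apply: eq_bigr => A _ /=.
rewrite big_distrr; apply: eq_bigr => B _ /=; rewrite scale_mvE.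
by case: ifP => _; rewrite ?mulr0 //; ring.
Qed.

Lemma gmulZr a (X Y : mv) : gmul X (a *: Y) = a *: gmul X Y.
Proof.
apply/ffunP => S; rewrite scale_mvE !ffunE big_distrr; apply: eq_bigr => A _ /=.
rewrite big_distrr; apply: eq_bigr => B _ /=; rewrite scale_mvE.
by case: ifP => _; rewrite ?mulr0 //; ring.
Qed.

Lemma gmulNl (X Y : mv) : gmul (- X) Y = - gmul X Y.
Proof. by rewrite -scaleN1r gmulZl scaleN1r. Qed.

Lemma gmulNr (X Y : mv) : gmul X (- Y) = - gmul X Y.
Proof. by rewrite -scaleN1r gmulZr scaleN1r. Qed.

Definition conj_by (B X : mv) : mv := gmul (gmul (sinv B) X) B.

Lemma sinvE (B : mv) : sinv B = (gmul B B set0)^-1 *: B.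
Proof. by apply/ffunP => S; rewrite scale_mvE ffunE. Qed.

Lemma conj_byE (B X : mv) : conj_by B X = (gmul B B set0)^-1 *: gmul (gmul B X) B.
Proof. by rewrite /conj_by sinvE !gmulZl. Qed.

Lemma conj_byD (B X Y : mv) : conj_by B (X + Y) = conj_by B X + conj_by B Y.
Proof. by rewrite /conj_by gmulDr gmulDl. Qed.

Lemma conj_byZ a (B X : mv) : conj_by B (a *: X) = a *: conj_by B X.
Proof. by rewrite /conj_by gmulZr gmulZl. Qed.

Lemma coorthogonalP (B C : mv) :
  coorthogonal B C -> gmul B C = gmul C B \/ gmul B C = - gmul C B.
Proof. by case=> ->; [left | right; apply/ffunP => S; rewrite !ffunE]. Qed.

Lemma conj_by_comm (B C X : mv) :
  coorthogonal B C -> conj_by B (conj_by C X) = conj_by C (conj_by B X).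
Proof.
move=> /coorthogonalP BC.
have sandwich U V : gmul (gmul U (gmul (gmul V X) V)) U =
    gmul (gmul (gmul U V) X) (gmul V U).
  by rewrite -!gmulA.
rewrite !conj_byE !gmulZr !gmulZl !scalerA [_^-1 * _]mulrC !sandwich.
by case: BC => ->; rewrite ?gmulNl ?gmulNr.
Qed.

Lemma cprojE j (B X : mv) : cproj j B X = 2^-1 *: (X + (-1) ^+ j *: conj_by B X).
Proof. by apply/ffunP => S; case: j; rewrite !(scale_mvE, ffunE) ?mulN1r ?mul1r. Qed.

Lemma cproj_comm j k (B C X : mv) : coorthogonal B C ->
  cproj j B (cproj k C X) = cproj k C (cproj j B X).
Proof.
move=> /conj_by_comm BC; rewrite !cprojE !(conj_byD, conj_byZ) BC.
move: (conj_by B X) (conj_by C X) (conj_by C (conj_by B X)) => U V W.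
by apply/ffunP => S; rewrite !(scale_mvE, ffunE); ring.
Qed.
End GeometricProduct.

Theorem lemma3p4 (R : realType) (p q d : nat) (B : 'I_d -> mv R p q)
    (hblade : forall k, blade (B k))
    (hsq : forall k, sq_nonzero_scalar (B k))
    (hco : forall k l, k != l -> coorthogonal (B k) (B l))
    (A : mv R p q) (j : 'I_d -> bool) (sigma : 'S_d) :
  cproj_fwd [seq (B (sigma i), j (sigma i)) | i <- enum 'I_d] A
    = cproj_fwd [seq (B i, j i) | i <- enum 'I_d] A
  /\
  cproj_bwd [seq (B (sigma i), j (sigma i)) | i <- enum 'I_d] A
    = cproj_bwd [seq (B i, j i) | i <- enum 'I_d] A.
Proof.
pose proj i := cproj (j i) (B i).
have proj_comm i k X : proj i (proj k X) = proj k (proj i X).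
  by case: (eqVneq i k) => [-> // | neq_ik]; apply/cproj_comm/hco.
have -> : [seq (B (sigma i), j (sigma i)) | i <- enum 'I_d] =
    [seq (B i, j i) | i <- map sigma (enum 'I_d)].
  exact: (map_comp (fun i => (B i, j i)) sigma).
rewrite /cproj_fwd /cproj_bwd.
rewrite !(foldl_map (fun i => (B i, j i))) !(foldr_map (fun i => (B i, j i))).
split.
  exact: (perm_foldl proj_comm A (perm_map_enum sigma)).
exact: (perm_foldr proj_comm A (perm_map_enum sigma)).
Qed.
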